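(* Let $K$ be a field and $A$ a noetherian $K$-algebra such that the endomorphism ring of every simple left $A$-module is algebraic over $K$. If $A$ is $(\diamond)$-extremal, then the center $Z$ of $A$ is algebraic over $K$.
   Context: A module $M$ is monolithic if the intersection of all nonzero submodules of $M$ is nonzero. A noetherian ring has property $(\diamond)$ if every finitely generated monolithic (left) module over it is artinian. A noetherian ring $A$ is $(\diamond)$-extremal if $A$ does not have property $(\diamond)$ but $A/I$ has property $(\diamond)$ for every nonzero two-sided ideal $I$ of $A$. *)

From HB Require Import structures.
From mathcomp Require Import all_boot all_order all_algebra.
Set Implicit Arguments. Unset Strict Implicit. Unset Printing Implicit Defensive.
Import GRing.Theory.
Local Open Scope ring_scope.

Definition submodule (R : pzRingType) (M : lmodType R) (S : M -> Prop) : Prop :=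
  [/\ S 0, (forall x y, S x -> S y -> S (x + y)) & (forall (a : R) x, S x -> S (a *: x))].

Definition left_ideal (R : pzRingType) (I : R -> Prop) : Prop :=
  [/\ I 0, (forall x y, I x -> I y -> I (x + y)) & (forall a x, I x -> I (a * x))].
Definition right_ideal (R : pzRingType) (I : R -> Prop) : Prop :=
  [/\ I 0, (forall x y, I x -> I y -> I (x + y)) & (forall a x, I x -> I (x * a))].

Definition ACC (T : Type) (P : (T -> Prop) -> Prop) : Prop :=
  forall C : nat -> T -> Prop, (forall n, P (C n)) ->
    (forall n x, C n x -> C n.+1 x) ->
    exists N, forall n, (N <= n)%N -> forall x, C n x -> C N x.

Definition DCC (T : Type) (P : (T -> Prop) -> Prop) : Prop :=
  forall C : nat -> T -> Prop, (forall n, P (C n)) ->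
    (forall n x, C n.+1 x -> C n x) ->
    exists N, forall n, (N <= n)%N -> forall x, C N x -> C n x.

Definition noetherian_ring (R : pzRingType) : Prop :=
  ACC (@left_ideal R) /\ ACC (@right_ideal R).

Definition artinian_module (R : pzRingType) (M : lmodType R) : Prop :=
  DCC (@submodule R M).

Definition finitely_generated (R : pzRingType) (M : lmodType R) : Prop :=
  exists (n : nat) (v : 'I_n -> M),
    forall m : M, exists c : 'I_n -> R, m = \sum_(i < n) c i *: v i.

(* M is monolithic: the intersection of all nonzero submodules is nonzero. *)
Definition monolithic (R : pzRingType) (M : lmodType R) : Prop :=
  exists x : M, x != 0 /\
    forall S : M -> Prop, submodule S -> (exists y, S y /\ y != 0) -> S x.

Definition diamond (R : pzRingType) : Prop :=
  forall M : lmodType R, finitely_generated M -> monolithic M -> artinian_module M.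

(* Factor rings A/I are
   represented (up to isomorphism) as surjective ring morphisms f : A -> B
   with nonzero kernel I = ker f. *)
Definition diamond_extremal (R : pzRingType) : Prop :=
  [/\ noetherian_ring R, ~ diamond R &
      forall (B : pzRingType) (f : {rmorphism R -> B}),
        (forall b : B, exists a : R, f a = b) ->
        (exists a : R, a != 0 /\ f a = 0) -> diamond B].

Definition simple_module (R : pzRingType) (M : lmodType R) : Prop :=
  (exists x : M, x != 0) /\
  forall S : M -> Prop, submodule S -> (forall x, S x -> x = 0) \/ (forall x, S x).

Definition module_endo (R : pzRingType) (M : lmodType R) (f : M -> M) : Prop :=
  (forall x y, f (x + y) = f x + f y) /\ (forall (a : R) x, f (a *: x) = a *: f x).

(* For a K-algebra A and a left A-module M, K acts on M through k |-> k%:A. *)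
Definition endo_algebraic (K : fieldType) (A : algType K) (M : lmodType A)
    (f : M -> M) : Prop :=
  exists p : {poly K}, p != 0 /\
    forall m : M, \sum_(i < size p) (p`_i)%:A *: iter i f m = 0.

Definition simple_endos_algebraic (K : fieldType) (A : algType K) : Prop :=
  forall M : lmodType A, simple_module M ->
    forall f : M -> M, module_endo f -> endo_algebraic f.

Definition center_algebraic (K : fieldType) (A : algType K) : Prop :=
  forall z : A, (forall a : A, z * a = a * z) ->
    exists p : {poly K}, p != 0 /\ \sum_(i < size p) p`_i *: z ^+ i = 0.

(* Suppose z is transcendental; we show that A has (diamond), contradicting
   extremality.  Let M be finitely generated and monolithic, with monolith
   A x.  Multiplication by z is an endomorphism of the simple module A x, so
   some nonzero polynomial p gives c := p(z) with c x = 0.  The element c is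
   central, and no power of c vanishes because z is transcendental.  As A is
   left noetherian, the annihilators of c^j m stabilise, which forces every
   m in M to be killed by a power of c; as M is finitely generated, a single
   power c^n annihilates M.  Then M is a module over the factor ring
   A / ann(M) by a nonzero ideal, which has (diamond), so M is artinian. *)
From HB Require Import structures.
From mathcomp Require Import all_boot all_order all_algebra.
From mathcomp Require Import boolp.
Set Implicit Arguments. Unset Strict Implicit. Unset Printing Implicit Defensive.
Import GRing.Theory.
Local Open Scope ring_scope.
Local Open Scope quotient_scope.

Definition spans_monolith (R : pzRingType) (M : lmodType R) (x : M) : Prop :=
  x != 0 /\ forall S : M -> Prop, submodule S -> (exists y, S y /\ y != 0) -> S x.

Section FactorByAnnihilator.
Variables (R : pzRingType) (M : lmodType R).

Definition annihilator : {pred R} := fun a => `[< forall m : M, a *: m = 0 >].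

Lemma annihilatorP a : reflect (forall m : M, a *: m = 0) (a \in annihilator).
Proof. exact: asboolP. Qed.

Lemma annihilator_zmod_closed : zmod_closed annihilator.
Proof.
split; first by apply/annihilatorP => m; rewrite scale0r.
move=> a b /annihilatorP ha /annihilatorP hb; apply/annihilatorP => m.
by rewrite scalerBl ha hb subr0.
Qed.
HB.instance Definition _ :=
  GRing.isZmodClosed.Build R annihilator annihilator_zmod_closed.

Lemma annihilatorMl a u : u \in annihilator -> a * u \in annihilator.
Proof. by move/annihilatorP => hu; apply/annihilatorP => m; rewrite -scalerA hu scaler0. Qed.
Lemma annihilatorMr a u : u \in annihilator -> u * a \in annihilator.
Proof. by move/annihilatorP => hu; apply/annihilatorP => m; rewrite -scalerA hu. Qed.

Definition factor := Quotient.quot annihilator.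
HB.instance Definition _ := Choice.on factor.
HB.instance Definition _ := GRing.Zmodule.on factor.

Local Notation pi := \pi_factor.

Lemma pi_eqP a b : reflect (pi a = pi b) (a - b \in annihilator).
Proof. by rewrite Quotient.idealrBE; apply: eqP. Qed.

Lemma repr_pi_ann a : a - repr (pi a) \in annihilator.
Proof. by apply/pi_eqP; rewrite reprK. Qed.

Definition factor_mul := lift_op2 factor *%R.

(* Multiplication is well defined because the annihilator is two-sided. *)
Lemma pi_mul : {morph pi : a b / a * b >-> factor_mul a b}.
Proof.
move=> a b; unlock factor_mul; apply/pi_eqP.
rewrite -[_ * _](subrK (a * repr (pi b))) -mulrBr -addrA -mulrBl.
by apply: rpredD; [apply: annihilatorMl | apply: annihilatorMr]; apply: repr_pi_ann.
Qed.
Canonical pi_mul_morph := PiMorph2 pi_mul.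
Definition factor_one : factor := lift_cst factor 1.
Canonical pi_one_morph := PiConst factor_one.

Lemma factor_mulA : associative factor_mul.
Proof. by move=> x y z; rewrite -[x]reprK -[y]reprK -[z]reprK !piE mulrA. Qed.
Lemma factor_mul1l : left_id factor_one factor_mul.
Proof. by move=> x; rewrite -[x]reprK !piE mul1r. Qed.
Lemma factor_mul1r : right_id factor_one factor_mul.
Proof. by move=> x; rewrite -[x]reprK !piE mulr1. Qed.
Lemma factor_mulDl : left_distributive factor_mul +%R.
Proof. by move=> x y z; rewrite -[x]reprK -[y]reprK -[z]reprK !piE mulrDl. Qed.
Lemma factor_mulDr : right_distributive factor_mul +%R.
Proof. by move=> x y z; rewrite -[x]reprK -[y]reprK -[z]reprK !piE mulrDr. Qed.

HB.instance Definition _ := GRing.Zmodule_isPzRing.Build factor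
  factor_mulA factor_mul1l factor_mul1r factor_mulDl factor_mulDr.

Definition factor_proj (a : R) : factor := pi a.

Lemma factor_proj_zmod_morphism : zmod_morphism factor_proj.
Proof. by move=> a b; rewrite /factor_proj !piE. Qed.
HB.instance Definition _ :=
  GRing.isZmodMorphism.Build R factor factor_proj factor_proj_zmod_morphism.

Lemma factor_proj_monoid_morphism : monoid_morphism factor_proj.
Proof. by split=> [|a b]; rewrite /factor_proj piE. Qed.
HB.instance Definition _ :=
  GRing.isMonoidMorphism.Build R factor factor_proj factor_proj_monoid_morphism.

Lemma factor_proj_surj (q : factor) : exists a, factor_proj a = q.
Proof. by exists (repr q); rewrite /factor_proj reprK. Qed.

Lemma factor_proj_ann a : a \in annihilator -> factor_proj a = 0.
Proof. by move=> a_ann; rewrite -(rmorph0 factor_proj); apply/pi_eqP; rewrite subr0. Qed.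

Lemma factor_ind (P : factor -> Prop) : (forall a, P (factor_proj a)) -> forall q, P q.
Proof. by move=> hP q; have [a <-] := factor_proj_surj q. Qed.

Definition factor_module : Type := M.
HB.instance Definition _ := GRing.Zmodule.on factor_module.

Definition factor_scale (q : factor) (m : factor_module) : factor_module :=
  repr q *: (m : M).

Lemma factor_scale_proj a m : factor_scale (factor_proj a) m = a *: (m : M).
Proof.
apply/eqP; rewrite eq_sym -subr_eq0 -scalerBl; apply/eqP.
exact: (annihilatorP _ (repr_pi_ann a)).
Qed.

Lemma factor_scaleA q r m :
  factor_scale q (factor_scale r m) = factor_scale (q * r) m.
Proof.
elim/factor_ind: q => a; elim/factor_ind: r => b.
by rewrite -rmorphM !factor_scale_proj scalerA.
Qed.
Lemma factor_scale1 : left_id 1 factor_scale.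
Proof. by move=> m; rewrite -(rmorph1 factor_proj) factor_scale_proj scale1r. Qed.
Lemma factor_scaleDr : right_distributive factor_scale +%R.
Proof. by move=> q m n; rewrite /factor_scale scalerDr. Qed.
Lemma factor_scaleDl m : {morph factor_scale^~ m : q r / q + r}.
Proof.
move=> q r; elim/factor_ind: q => a; elim/factor_ind: r => b.
by rewrite -rmorphD !factor_scale_proj scalerDl.
Qed.
HB.instance Definition _ := GRing.Zmodule_isLmodule.Build factor factor_module
  factor_scaleA factor_scale1 factor_scaleDr factor_scaleDl.

(* Both actions have the same submodules, so finite generation, monolithicity
   and the artinian property are unaffected by the change of scalars. *)
Lemma factor_submoduleE (S : M -> Prop) :
  @submodule factor factor_module S <-> submodule S.
Proof.
split=> -[S0 SD SZ]; split=> // a m Sm.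
- by rewrite -factor_scale_proj; apply: SZ.
- by elim/factor_ind: a => a; rewrite [_ *: _]factor_scale_proj; apply: SZ.
Qed.

Lemma factor_finitely_generated :
  finitely_generated M -> finitely_generated factor_module.
Proof.
case=> n [v gen_v]; exists n, v => m; have [c ->] := gen_v m.
by exists (factor_proj \o c); apply: eq_bigr => i _; exact: esym (factor_scale_proj _ _).
Qed.

Lemma factor_monolithic : monolithic M -> monolithic factor_module.
Proof.
case=> x [x_neq0 heart]; exists x; split=> // S /factor_submoduleE.
exact: heart.
Qed.

Lemma artinian_of_factor : artinian_module factor_module -> artinian_module M.
Proof. by move=> art C subC; apply: art => n; apply/factor_submoduleE. Qed.

End FactorByAnnihilator.

Definition proper_factors_diamond (R : pzRingType) : Prop :=
  forall (B : pzRingType) (f : {rmorphism R -> B}),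
    (forall b : B, exists a : R, f a = b) ->
    (exists a : R, a != 0 /\ f a = 0) -> diamond B.

(* If all proper factor rings have (diamond), then a finitely generated
   monolithic module with a nonzero annihilating element is artinian: it is
   a module over the proper factor ring R / ann(M). *)
Lemma artinian_of_annihilated (R : pzRingType) (M : lmodType R) (d : R) :
  proper_factors_diamond R -> finitely_generated M -> monolithic M ->
  d != 0 -> d \in annihilator M -> artinian_module M.
Proof.
move=> factors_diamond fgM monoM d_neq0 d_ann.
apply/artinian_of_factor/(factors_diamond _ (factor_proj M)).
- exact: factor_proj_surj.
- by exists d; split=> //; apply: factor_proj_ann.
- exact: factor_finitely_generated.
- exact: factor_monolithic.
Qed.

Section CyclicSubmodule.
Variables (R : pzRingType) (M : lmodType R) (x : M).

Definition cyclic_span : {pred M} := fun y => `[< exists a, y = a *: x >].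

Lemma cyclic_spanP y : reflect (exists a, y = a *: x) (y \in cyclic_span).
Proof. exact: asboolP. Qed.

Lemma cyclic_span_submod_closed : submod_closed cyclic_span.
Proof.
split; first by apply/cyclic_spanP; exists 0; rewrite scale0r.
move=> c u v /cyclic_spanP[a ->] /cyclic_spanP[b ->]; apply/cyclic_spanP.
by exists (c * a + b); rewrite scalerDl scalerA.
Qed.
HB.instance Definition _ :=
  GRing.isSubmodClosed.Build R M cyclic_span cyclic_span_submod_closed.

Definition cyclic_submodule : Type := {y : M | y \in cyclic_span}.
HB.instance Definition _ :=
  [isSub of cyclic_submodule for (@sval M (fun y => y \in cyclic_span))].
HB.instance Definition _ := [Choice of cyclic_submodule by <:].
HB.instance Definition _ := [SubChoice_isSubLmodule of cyclic_submodule by <:].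

Lemma generator_in_span : x \in cyclic_span.
Proof. by apply/cyclic_spanP; exists 1; rewrite scale1r. Qed.

Definition generator : cyclic_submodule := exist _ x generator_in_span.

Lemma span_submodule : submodule (fun y => y \in cyclic_span).
Proof.
split=> [|u v|a u]; [exact: rpred0 | exact: rpredD | exact: rpredZ].
Qed.

Lemma monolith_simple : spans_monolith x -> simple_module cyclic_submodule.
Proof.
move=> [x_neq0 heart]; split.
  by exists generator; rewrite -(inj_eq val_inj) linear0.
move=> T [T0 TD TZ]; have [[t [Tt t_neq0]]|T_trivial] := pselect (exists t, T t /\ t != 0).
  right => u; pose S y := exists t, T t /\ val t = y.
  have subS : submodule S.
    split; first by exists 0.
      by move=> _ _ [t1 [T1 <-]] [t2 [T2 <-]]; exists (t1 + t2); split; [apply: TD|].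
    by move=> a _ [t1 [T1 <-]]; exists (a *: t1); split; [apply: TZ|].
  have [t0 [Tt0 t0x]] : S x.
    apply: heart subS _; exists (val t); split; first by exists t.
    by rewrite -(inj_eq val_inj) linear0 in t_neq0.
  have /cyclic_spanP[a ua] := valP u.
  have -> : u = a *: t0 by apply: val_inj; rewrite ua linearZ /= t0x.
  exact: TZ.
left => t Tt; apply: contrapT => /eqP t_neq0; apply: T_trivial; by exists t.
Qed.

End CyclicSubmodule.

Lemma monolith_in_span (R : pzRingType) (M : lmodType R) (x y : M) :
  spans_monolith x -> y != 0 -> exists a, x = a *: y.
Proof.
move=> [_ heart] y_neq0; apply/cyclic_spanP; apply: heart (span_submodule y) _.
by exists y; split=> //; apply: generator_in_span.
Qed.

Definition central (R : pzRingType) (z : R) : Prop := forall a, z * a = a * z.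

Lemma central_scale_endo (R : pzRingType) (M : lmodType R) (z : R) :
  central z -> module_endo (fun u : M => z *: u).
Proof. by move=> z_central; split=> [u v|a u]; rewrite ?scalerDr // !scalerA z_central. Qed.

Lemma iter_scale (R : pzRingType) (M : lmodType R) (z : R) (i : nat) (u : M) :
  iter i (fun v => z *: v) u = z ^+ i *: u.
Proof. by elim: i => [|i IHi]; rewrite ?scale1r //= IHi scalerA -exprS. Qed.

Lemma element_annihilator_left_ideal (R : pzRingType) (M : lmodType R) (m : M) :
  left_ideal (fun a : R => a *: m = 0).
Proof.
split=> [|a b ma mb|a b mb]; first exact: scale0r.
  by rewrite scalerDl ma mb addr0.
by rewrite -scalerA mb scaler0.
Qed.

(* The annihilators of the c^j m form
   an ascending chain of left ideals, stable from some N on.  If c^N m were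
   nonzero, the monolith would be x = a c^N m; then a c^(N+1) m = c x = 0, so
   a kills c^N m by stability, i.e. x = 0, which is absurd. *)
Lemma power_kills_element (R : pzRingType) (M : lmodType R) (x : M) (c : R) :
  ACC (@left_ideal R) -> spans_monolith x -> central c -> c *: x = 0 ->
  forall m : M, exists n, c ^+ n *: m = 0.
Proof.
move=> noeth monoM c_central cx m.
pose L j (a : R) := a *: (c ^+ j *: m) = 0.
have idealL j : left_ideal (L j) by apply: element_annihilator_left_ideal.
have incL j a : L j a -> L j.+1 a.
  by rewrite {2}/L exprS -scalerA scalerA -c_central -scalerA => ->; rewrite scaler0.
have [N stable] := noeth L idealL incL.
exists N; apply: contrapT => /eqP cNm_neq0.
have [a xa] := monolith_in_span monoM cNm_neq0.
have : L N.+1 a by rewrite /L exprS -scalerA scalerA -c_central -scalerA -xa.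
move/(stable _ (leqnSn N)); rewrite /L -xa => x_eq0.
by case: monoM; rewrite x_eq0 eqxx.
Qed.

Lemma power_annihilates (R : pzRingType) (M : lmodType R) (c : R) :
  central c -> finitely_generated M ->
  (forall m : M, exists n, c ^+ n *: m = 0) -> exists n, c ^+ n \in annihilator M.
Proof.
move=> c_central [k [v gen_v]] kills.
have [n kills_v] : exists n, forall i, c ^+ n *: v i = 0.
  elim: k v {gen_v} => [|k IHk] v; first by exists 0%N => -[].
  have [n1 kill1] := kills (v ord0).
  have [n2 kill2] := IHk (fun i => v (lift ord0 i)).
  exists (n1 + n2)%N => i; case: (unliftP ord0 i) => [j ->|->].
  - by rewrite exprD -scalerA kill2 scaler0.
  - by rewrite addnC exprD -scalerA kill1 scaler0.
exists n; apply/annihilatorP => m; have [a ->] := gen_v m.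
rewrite scaler_sumr big1 // => i _.
by rewrite scalerA -(commrX n (esym (c_central (a i)))) -scalerA kills_v scaler0.
Qed.

Section PolynomialsInCentralElements.
Variables (K : fieldType) (A : algType K).

Lemma horner_alg_sum (z : A) (p : {poly K}) :
  \sum_(i < size p) p`_i *: z ^+ i = horner_alg z p.
Proof.
rewrite /horner_alg /horner_morph (horner_coef_wide _ (size_poly _ _)).
by apply: eq_bigr => i _; rewrite coef_map /= mulr_algl.
Qed.

Lemma horner_alg_central (z : A) (p : {poly K}) :
  central z -> central (horner_alg z p).
Proof.
move=> z_central a; apply/esym/commr_horner; first exact/esym/z_central.
by move=> i; rewrite coef_map; exact: comm_alg.
Qed.

Lemma algebraic_scale_annihilates (N : lmodType A) (z : A) :
  endo_algebraic (fun u : N => z *: u) ->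
  exists2 p : {poly K}, p != 0 & forall u : N, horner_alg z p *: u = 0.
Proof.
case=> p [p_neq0 p_kills]; exists p => // u.
rewrite -horner_alg_sum scaler_suml -[RHS](p_kills u); apply: eq_bigr => i _.
by rewrite iter_scale scalerA mulr_algl.
Qed.

End PolynomialsInCentralElements.

Theorem proposition5p1 (K : fieldType) (A : algType K) :
  noetherian_ring A -> simple_endos_algebraic A -> diamond_extremal A ->
  center_algebraic A.
Proof.
move=> [noethA _] simple_alg [_ not_diamond factors_diamond] z z_central.
apply: contrapT => z_transcendental; apply: not_diamond => M fgM monoM.
have [x monolith_x] := monoM.
have [p p_neq0 p_kills] := algebraic_scale_annihilates
  (simple_alg _ (monolith_simple monolith_x) _ (central_scale_endo _ z_central)).
pose c := horner_alg z p.
have c_central : central c by apply: horner_alg_central.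
have cx : c *: x = 0 by have := congr1 val (p_kills (generator x)); rewrite linearZ.
have [n cn_ann] := power_annihilates c_central fgM
  (power_kills_element noethA monolith_x c_central cx).
apply: (artinian_of_annihilated factors_diamond fgM monoM _ cn_ann).
apply/eqP => cn_eq0; apply: z_transcendental.
exists (p ^+ n); split; first exact: expf_neq0.
by rewrite horner_alg_sum rmorphXn.
Qed.
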